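(* Let $\Theta$ be a well-formed System $\mathsf{F_\wedge}$ context, $S,S'$ types over $\Theta$ and $T,T'$ types over $\Theta, X<:\top$. If $\Theta \vdash S' <: S$ and $\Theta, X <: \top \vdash T <: T'$, then $\Theta \vdash \forall X.\,T[X\wedge S/X^-] <: \forall X.\,T'[X \wedge S'/X^-]$.
   Context: System $\mathsf{F_\wedge}$: raw types $T ::= \top \mid X \mid T \to T \mid \forall X.T \mid T \wedge T$, identified up to $\alpha$-conversion. Contexts are finite sequences of assumptions $X<:T$ or $x:T$ with distinct variables, each type well-formed over the preceding part. Subtyping $\Theta \vdash S <: T$ is generated by: (Var) $\Theta, X<:T,\Theta' \vdash X <: T$; (Top) $T <: \top$; (Refl); (Trans); ($\to$) from $S'<:S$ and $T<:T'$ infer $S\to T <: S' \to T'$; ($\forall$) from $\Theta, X<:\top \vdash S <: T$ infer $\Theta \vdash \forall X.S <: \forall X.T$; (meet) $S\wedge S' <: S$, $S \wedge S' <: S'$, and from $T<:S$, $T<:S'$ infer $T <: S\wedge S'$. Mixed substitution $T[(S_-,S_+)/X]$: $X[(S_-,S_+)/X] = S_+$; $Y[(S_-,S_+)/X] = Y$ for $Y \not\equiv X$; $\top \mapsto \top$; $(T\to T')[(S_-,S_+)/X] = T[(S_+,S_-)/X] \to T'[(S_-,S_+)/X]$; $(\forall Y.T)[(S_-,S_+)/X] = \forall Y.T[(S_-,S_+)/X]$; $(T\wedge T')[(S_-,S_+)/X] = T[(S_-,S_+)/X] \wedge T'[(S_-,S_+)/X]$ (bound variables renamed to avoid capture). $T[U/X^-]$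 abbreviates $T[(U,X)/X]$, i.e. only negative occurrences of $X$ are replaced by $U$. *)

(* System F_/\ in locally nameless representation:
   bound type variables are de Bruijn indices (so alpha-equivalent types are
   syntactically equal), free variables are named atoms (nat). *)
From Stdlib Require Import List Arith.
Import ListNotations.

Definition atom := nat.

Inductive ty : Type :=
  | TTop  : ty
  | TBVar : nat -> ty
  | TFVar : atom -> ty
  | TArr  : ty -> ty -> ty
  | TAll  : ty -> ty
  | TMeet : ty -> ty -> ty.

Fixpoint open_rec (k : nat) (U : ty) (T : ty) : ty :=
  match T with
  | TTop => TTop
  | TBVar n => if Nat.eqb n k then U else TBVar n
  | TFVar X => TFVar X
  | TArr T1 T2 => TArr (open_rec k U T1) (open_rec k U T2)
  | TAll T1 => TAll (open_rec (S k) U T1)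
  | TMeet T1 T2 => TMeet (open_rec k U T1) (open_rec k U T2)
  end.
Definition open (T U : ty) : ty := open_rec 0 U T.

Fixpoint close_rec (k : nat) (X : atom) (T : ty) : ty :=
  match T with
  | TTop => TTop
  | TBVar n => TBVar n
  | TFVar Y => if Nat.eqb X Y then TBVar k else TFVar Y
  | TArr T1 T2 => TArr (close_rec k X T1) (close_rec k X T2)
  | TAll T1 => TAll (close_rec (S k) X T1)
  | TMeet T1 T2 => TMeet (close_rec k X T1) (close_rec k X T2)
  end.
Definition all_ (X : atom) (T : ty) : ty := TAll (close_rec 0 X T).

Fixpoint fv (T : ty) : list atom :=
  match T with
  | TTop | TBVar _ => []
  | TFVar X => [X]
  | TArr T1 T2 | TMeet T1 T2 => fv T1 ++ fv T2
  | TAll T1 => fv T1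
  end.

Fixpoint lc_at (k : nat) (T : ty) : Prop :=
  match T with
  | TTop | TFVar _ => True
  | TBVar n => n < k
  | TArr T1 T2 | TMeet T1 T2 => lc_at k T1 /\ lc_at k T2
  | TAll T1 => lc_at (S k) T1
  end.

(* Mixed substitution T[(Sm,Sp)/X]: positive occurrences of X get Sp,
   negative ones Sm; polarity flips in the domain of an arrow. *)
Fixpoint msubst (Sm Sp : ty) (X : atom) (T : ty) : ty :=
  match T with
  | TTop => TTop
  | TBVar n => TBVar n
  | TFVar Y => if Nat.eqb X Y then Sp else TFVar Y
  | TArr T1 T2 => TArr (msubst Sp Sm X T1) (msubst Sm Sp X T2)
  | TAll T1 => TAll (msubst Sm Sp X T1)
  | TMeet T1 T2 => TMeet (msubst Sm Sp X T1) (msubst Sm Sp X T2)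
  end.
(* T[U/X^-] := T[(U,X)/X] *)
Definition nsubst (U : ty) (X : atom) (T : ty) : ty := msubst U (TFVar X) X T.

(* Contexts: most recent assumption at the head of the list. *)
Inductive binding : Type :=
  | BSub : ty -> binding
  | BTyp : ty -> binding.
Definition ctx := list (atom * binding).

Definition dom (G : ctx) : list atom := map fst G.

Definition wf_ty (G : ctx) (T : ty) : Prop :=
  lc_at 0 T /\ forall Y, In Y (fv T) -> exists U, In (Y, BSub U) G.

Inductive wf_ctx : ctx -> Prop :=
  | wf_nil : wf_ctx []
  | wf_sub : forall G X T, wf_ctx G -> ~ In X (dom G) -> wf_ty G T ->
      wf_ctx ((X, BSub T) :: G)
  | wf_typ : forall G x T, wf_ctx G -> ~ In x (dom G) -> wf_ty G T ->
      wf_ctx ((x, BTyp T) :: G).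

Inductive sub : ctx -> ty -> ty -> Prop :=
  | sub_var : forall G X T, In (X, BSub T) G -> sub G (TFVar X) T
  | sub_top : forall G T, sub G T TTop
  | sub_refl : forall G T, sub G T T
  | sub_trans : forall G S U T, sub G S U -> sub G U T -> sub G S T
  | sub_arr : forall G S S' T T', sub G S' S -> sub G T T' ->
      sub G (TArr S T) (TArr S' T')
  | sub_all : forall G S T X,
      ~ In X (dom G) -> ~ In X (fv S) -> ~ In X (fv T) ->
      sub ((X, BSub TTop) :: G) (open S (TFVar X)) (open T (TFVar X)) ->
      sub G (TAll S) (TAll T)
  | sub_meet_l : forall G S S', sub G (TMeet S S') S
  | sub_meet_r : forall G S S', sub G (TMeet S S') S'
  | sub_meet_glb : forall G T S S', sub G T S -> sub G T S' ->
      sub G T (TMeet S S').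

(* After opening both quantifiers with X, it suffices to show
   X <: Top, Th |- T[X /\ S / X^-] <: T'[X /\ S' / X^-].
   Since X is bounded by Top, a mixed substitution for X maps every
   derivation of T <: T' to a derivation between the substituted types: the
   variable rule for X only yields X <: Top, and the arrow rule flips
   polarities exactly as the mixed substitution does.  This gives
   T[X /\ S / X^-] <: T'[X /\ S / X^-].  Mixed substitution is moreover
   antitone in what replaces the negative occurrences, and X /\ S' <: X /\ S,
   whence T'[X /\ S / X^-] <: T'[X /\ S' / X^-].  Both facts are proved for
   simultaneous substitutions, so that the fresh renamings forced by the
   quantifier rule are instances of them. *)

From Stdlib Require Import List Arith Lia Wf_nat.

Fixpoint psubst (sm sp : atom -> ty) (T : ty) : ty :=
  match T with
  | TTop => TTop
  | TBVar n => TBVar n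
  | TFVar Y => sp Y
  | TArr A B => TArr (psubst sp sm A) (psubst sm sp B)
  | TAll A => TAll (psubst sm sp A)
  | TMeet A B => TMeet (psubst sm sp A) (psubst sm sp B)
  end.

Definition upd (f : atom -> ty) (X : atom) (U : ty) : atom -> ty :=
  fun Y => if Nat.eqb Y X then U else f Y.

Lemma upd_eq f X U : upd f X U X = U.
Proof. unfold upd; now rewrite Nat.eqb_refl. Qed.

Lemma upd_neq f X U Y : Y <> X -> upd f X U Y = f Y.
Proof. intro HYX; unfold upd; now destruct (Nat.eqb_spec Y X). Qed.

Lemma msubst_psubst Sm Sp X T :
  msubst Sm Sp X T = psubst (upd TFVar X Sm) (upd TFVar X Sp) T.
Proof.
  revert Sm Sp; induction T; intros Sm Sp; simpl; f_equal; auto.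
  unfold upd; now rewrite Nat.eqb_sym.
Qed.

Lemma psubst_ext T : forall sm sp sm' sp',
  (forall Y, In Y (fv T) -> sm Y = sm' Y /\ sp Y = sp' Y) ->
  psubst sm sp T = psubst sm' sp' T.
Proof.
  induction T; intros sm sp sm' sp' Hagree; simpl in *; try reflexivity.
  - apply Hagree; now left.
  - rewrite (IHT1 sp sm sp' sm'), (IHT2 sm sp sm' sp'); [reflexivity | |];
      intros Y HY; specialize (Hagree Y); rewrite in_app_iff in Hagree; tauto.
  - now rewrite (IHT sm sp sm' sp').
  - rewrite (IHT1 sm sp sm' sp'), (IHT2 sm sp sm' sp'); [reflexivity | |];
      intros Y HY; specialize (Hagree Y); rewrite in_app_iff in Hagree; tauto.
Qed.

Lemma psubst_fixed T sm sp :
  (forall Y, In Y (fv T) -> sm Y = TFVar Y /\ sp Y = TFVar Y) -> psubst sm sp T = T.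
Proof.
  intro Hfix; rewrite (psubst_ext T sm sp TFVar TFVar) by exact Hfix.
  clear Hfix; induction T; simpl; f_equal; auto.
Qed.

Lemma lc_at_mono T : forall k j, lc_at k T -> k <= j -> lc_at j T.
Proof.
  induction T; simpl; intros k j Hlc Hkj; try tauto; try lia.
  - split; [apply (IHT1 k) | apply (IHT2 k)]; tauto.
  - apply (IHT (S k)); auto with arith.
  - split; [apply (IHT1 k) | apply (IHT2 k)]; tauto.
Qed.

Lemma open_rec_lc T : forall k j U, lc_at k T -> k <= j -> open_rec j U T = T.
Proof.
  induction T; simpl; intros k j U Hlc Hkj; f_equal; try reflexivity.
  - destruct (Nat.eqb_spec n j); [lia | reflexivity].
  - apply (IHT1 k); tauto.
  - apply (IHT2 k); tauto.
  - apply (IHT (S k)); auto with arith.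
  - apply (IHT1 k); tauto.
  - apply (IHT2 k); tauto.
Qed.

Definition lc_map (f : atom -> ty) : Prop := forall Y, lc_at 0 (f Y).

Lemma lc_map_upd f X U : lc_map f -> lc_at 0 U -> lc_map (upd f X U).
Proof. intros Hf HU Y; unfold upd; now destruct (Nat.eqb Y X). Qed.

Lemma lc_map_TFVar : lc_map TFVar.
Proof. intro Y; exact I. Qed.

Lemma lc_map_upd_var f X W : lc_map f -> lc_map (upd f X (TFVar W)).
Proof. intro Hf; apply lc_map_upd; [exact Hf | exact I]. Qed.

Lemma lc_at_psubst T : forall k sm sp, lc_map sm -> lc_map sp ->
  lc_at k T -> lc_at k (psubst sm sp T).
Proof.
  induction T; simpl; intros k sm sp Hsm Hsp Hlc; auto.
  - apply (lc_at_mono _ 0); auto with arith.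
  - destruct Hlc; auto.
  - destruct Hlc; auto.
Qed.

Lemma psubst_open_rec S : forall k U sm sp, lc_map sm -> lc_map sp ->
  psubst sp sm U = psubst sm sp U ->
  psubst sm sp (open_rec k U S) = open_rec k (psubst sm sp U) (psubst sm sp S).
Proof.
  induction S; intros k U sm sp Hsm Hsp HU; simpl; f_equal; auto.
  - now destruct (Nat.eqb n k).
  - symmetry; apply (open_rec_lc _ 0); auto with arith.
  - rewrite <- HU; auto.
Qed.

Lemma psubst_open_var sm sp T X W : lc_map sm -> lc_map sp -> ~ In X (fv T) ->
  psubst (upd sm X (TFVar W)) (upd sp X (TFVar W)) (open T (TFVar X))
  = open (psubst sm sp T) (TFVar W).
Proof.
  intros Hsm Hsp HX; unfold open.
  rewrite psubst_open_rec; cbn [psubst]; rewrite ?upd_eq;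
    auto using lc_map_upd_var.
  f_equal; apply psubst_ext; intros Y HY.
  rewrite !upd_neq by (intros ->; contradiction); auto.
Qed.

Lemma fv_close_rec U : forall k X, ~ In X (fv (close_rec k X U)).
Proof.
  induction U; simpl; intros k X; rewrite ?in_app_iff; auto; try firstorder.
  destruct (Nat.eqb_spec X a); simpl; [auto | intuition].
Qed.

Lemma open_close_rec U : forall k X, lc_at k U ->
  open_rec k (TFVar X) (close_rec k X U) = U.
Proof.
  induction U; simpl; intros k X Hlc; try reflexivity.
  - destruct (Nat.eqb_spec n k); [lia | reflexivity].
  - destruct (Nat.eqb_spec X a) as [-> |]; simpl; [now rewrite Nat.eqb_refl | reflexivity].
  - destruct Hlc; f_equal; auto.
  - f_equal; auto.
  - destruct Hlc; f_equal; auto.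
Qed.

Lemma exists_fresh (l : list atom) : exists W, ~ In W l.
Proof.
  exists (S (list_max l)); intro Hin.
  assert (Hmax : Forall (fun k => k <= list_max l) l) by (apply list_max_le; lia).
  rewrite Forall_forall in Hmax; apply Hmax in Hin; lia.
Qed.

Lemma in_dom G Y b : In (Y, b) G -> In Y (dom G).
Proof. intro HYb; exact (in_map fst G (Y, b) HYb). Qed.

Definition bounds_in_dom (G : ctx) : Prop :=
  forall Y V, In (Y, BSub V) G -> incl (fv V) (dom G).

Lemma wf_ctx_bounds_in_dom G : wf_ctx G -> bounds_in_dom G.
Proof.
  induction 1 as [| G X T _ IH _ [_ Hfv] | G x T _ IH _ _];
    intros Y V HYV W HW; [destruct HYV | ..];
    destruct HYV as [HYV | HYV]; try discriminate.
  - injection HYV as <- <-; destruct (Hfv W HW) as [U HU].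
    right; exact (in_dom _ _ _ HU).
  - right; exact (IH Y V HYV W HW).
  - right; exact (IH Y V HYV W HW).
Qed.

Lemma bounds_in_dom_cons_top G X :
  bounds_in_dom G -> bounds_in_dom ((X, BSub TTop) :: G).
Proof.
  intros Hbounds Y V [HYV | HYV] W HW.
  - injection HYV as <- <-; contradiction.
  - right; exact (Hbounds Y V HYV W HW).
Qed.

(* [Top]-bounded variables may be replaced by anything, since the variable
   rule yields only [Y <: Top] for them. *)
Definition bound_preserving (G G' : ctx) (sm sp : atom -> ty) : Prop :=
  forall Y V, In (Y, BSub V) G -> V = TTop \/
    (In (Y, BSub V) G' /\
     forall Z, In Z (Y :: fv V) -> sm Z = TFVar Z /\ sp Z = TFVar Z).

Lemma bound_preserving_sym G G' sm sp :
  bound_preserving G G' sm sp -> bound_preserving G G' sp sm.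
Proof.
  intros Hpres Y V HYV.
  destruct (Hpres Y V HYV) as [| [HYV' Hfix]]; [now left | right].
  split; [exact HYV' | intros Z HZ; destruct (Hfix Z HZ); auto].
Qed.

Lemma bound_preserving_id G G' :
  (forall Y V, In (Y, BSub V) G -> In (Y, BSub V) G') ->
  bound_preserving G G' TFVar TFVar.
Proof. intros Hincl Y V HYV; right; auto. Qed.

Lemma bound_preserving_cons_top G G' sm sp X e U U' :
  bounds_in_dom G -> ~ In X (dom G) -> bound_preserving G G' sm sp ->
  bound_preserving ((X, BSub TTop) :: G) (e :: G') (upd sm X U) (upd sp X U').
Proof.
  intros Hbounds HX Hpres Y V [HYV | HYV].
  - injection HYV as <- <-; now left.
  - destruct (Hpres Y V HYV) as [| [HYV' Hfix]]; [now left | right].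
    split; [now right |].
    intros Z HZ.
    assert (HZX : Z <> X).
    { intros ->; apply HX; destruct HZ as [<- | HZ];
        [exact (in_dom _ _ _ HYV) | exact (Hbounds Y V HYV X HZ)]. }
    rewrite !upd_neq by exact HZX; auto.
Qed.

Lemma sub_psubst G T U : sub G T U -> forall G' sm sp,
  bounds_in_dom G -> lc_map sm -> lc_map sp -> bound_preserving G G' sm sp ->
  sub G' (psubst sm sp T) (psubst sm sp U).
Proof.
  induction 1 as [G X V HXV | | | | G S S' T T' _ IHS _ IHT
                 | G S T X HX HXS HXT _ IH | | |];
    intros G' sm sp Hbounds Hsm Hsp Hpres; simpl.
  - destruct (Hpres X V HXV) as [-> | [HXV' Hfix]]; [apply sub_top |].
    destruct (Hfix X (or_introl eq_refl)) as [_ ->].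
    rewrite psubst_fixed by (intros Z HZ; apply Hfix; now right).
    now apply sub_var.
  - apply sub_top.
  - apply sub_refl.
  - eapply sub_trans; eauto.
  - apply sub_arr; [apply IHS | apply IHT]; auto using bound_preserving_sym.
  - destruct (exists_fresh (dom G' ++ fv (psubst sm sp S) ++ fv (psubst sm sp T)))
      as [W HW].
    rewrite !in_app_iff in HW.
    apply (sub_all _ _ _ W); try tauto.
    rewrite <- !(psubst_open_var sm sp _ X W) by assumption.
    apply IH; auto using bounds_in_dom_cons_top, lc_map_upd_var, bound_preserving_cons_top.
  - apply sub_meet_l.
  - apply sub_meet_r.
  - apply sub_meet_glb; auto.
Qed.

Lemma sub_weaken G G' S T :
  bounds_in_dom G -> (forall Y V, In (Y, BSub V) G -> In (Y, BSub V) G') ->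
  sub G S T -> sub G' S T.
Proof.
  intros Hbounds Hincl HST.
  rewrite <- (psubst_fixed S TFVar TFVar), <- (psubst_fixed T TFVar TFVar) by auto.
  apply (sub_psubst G); auto using lc_map_TFVar, bound_preserving_id.
Qed.

Fixpoint size (T : ty) : nat :=
  match T with
  | TTop | TBVar _ | TFVar _ => 1
  | TArr A B | TMeet A B => S (size A + size B)
  | TAll A => S (size A)
  end.

Lemma size_open_rec_var T : forall k W, size (open_rec k (TFVar W) T) = size T.
Proof.
  induction T; simpl; intros k W; auto.
  now destruct (Nat.eqb n k).
Qed.

Lemma psubst_sub_mono T : forall G sm sp sm' sp',
  bounds_in_dom G -> lc_map sm -> lc_map sp -> lc_map sm' -> lc_map sp' ->
  (forall Y, sub G (sm' Y) (sm Y) /\ sub G (sp Y) (sp' Y)) ->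
  sub G (psubst sm sp T) (psubst sm' sp' T).
Proof.
  induction T as [T IH] using (well_founded_ind (well_founded_ltof _ size)).
  intros G sm sp sm' sp' Hbounds Hsm Hsp Hsm' Hsp' Hle.
  destruct T as [| n | Y | A B | A | A B]; simpl.
  - apply sub_refl.
  - apply sub_refl.
  - apply Hle.
  - apply sub_arr; apply IH; auto; try (unfold ltof; simpl; lia).
    intro Y; destruct (Hle Y); auto.
  - destruct (exists_fresh (dom G ++ fv A ++ fv (psubst sm sp A) ++ fv (psubst sm' sp' A)))
      as [W HW].
    rewrite !in_app_iff in HW.
    apply (sub_all _ _ _ W); try tauto.
    rewrite <- !(psubst_open_var _ _ A W W) by tauto.
    apply IH; auto using bounds_in_dom_cons_top, lc_map_upd_var.
    + unfold ltof, open; simpl; rewrite size_open_rec_var; lia.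
    + intro Z; unfold upd; destruct (Nat.eqb Z W); [split; apply sub_refl |].
      destruct (Hle Z); split; apply (sub_weaken G); auto; intros; now right.
  - apply sub_meet_glb.
    + eapply sub_trans; [apply sub_meet_l |]; apply IH; auto; unfold ltof; simpl; lia.
    + eapply sub_trans; [apply sub_meet_r |]; apply IH; auto; unfold ltof; simpl; lia.
Qed.

Theorem lemma3p7 (Th : ctx) (X : atom) (S S' T T' : ty) :
  wf_ctx Th -> ~ In X (dom Th) ->
  wf_ty Th S -> wf_ty Th S' ->
  wf_ty ((X, BSub TTop) :: Th) T -> wf_ty ((X, BSub TTop) :: Th) T' ->
  sub Th S' S ->
  sub ((X, BSub TTop) :: Th) T T' ->
  sub Th (all_ X (nsubst (TMeet (TFVar X) S) X T))
         (all_ X (nsubst (TMeet (TFVar X) S') X T')).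
Proof.
  unfold wf_ty; intros Hwf HX [HlcS _] [HlcS' _] [HlcT _] [HlcT' _] HS'S HTT'.
  assert (Hbounds : bounds_in_dom Th) by now apply wf_ctx_bounds_in_dom.
  assert (Hlc : forall A, lc_at 0 A -> lc_map (upd TFVar X (TMeet (TFVar X) A)))
    by (intros; apply lc_map_upd; [exact lc_map_TFVar | now split]).
  unfold all_, nsubst; rewrite !msubst_psubst.
  apply (sub_all _ _ _ X); try apply fv_close_rec; [exact HX |].
  unfold open; rewrite !open_close_rec
    by (apply lc_at_psubst; auto using lc_map_upd_var, lc_map_TFVar).
  apply sub_trans with (psubst (upd TFVar X (TMeet (TFVar X) S)) (upd TFVar X (TFVar X)) T').
  - apply (sub_psubst _ _ _ HTT');
      auto using bounds_in_dom_cons_top, lc_map_upd_var, lc_map_TFVar.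
    apply bound_preserving_cons_top, bound_preserving_id; auto.
  - apply psubst_sub_mono;
      auto using bounds_in_dom_cons_top, lc_map_upd_var, lc_map_TFVar.
    intro Y; unfold upd; destruct (Nat.eqb Y X); split; try apply sub_refl.
    apply sub_meet_glb; [apply sub_meet_l |].
    apply sub_trans with S'; [apply sub_meet_r |].
    apply (sub_weaken Th); auto; intros; now right.
Qed.
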